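(* Let $\{\phi_i=U_i\phi\}_{i=1}^n$ be a geometrically uniform frame for $\mathbb{C}^m$ with generating group $\mathcal{Q}=\{U_1,\dots,U_n\}$, let $Q=\mathbb{Z}_{n_1}\times\cdots\times\mathbb{Z}_{n_p}$ be an additive group with a group isomorphism $\mathcal{Q}\to Q$, $U_i\mapsto q$, and write $\phi(q)=U_i\phi$ for the corresponding frame vector (so $\phi(0)=\phi$). Let $S=\sum_i\phi_i\phi_i^*$. Define $s(q)=\langle\phi(0),\phi(q)\rangle$, its Fourier transform $\hat s(h)=\frac1{\sqrt n}\sum_{q\in Q}\langle h,q\rangle s(q)$, the vector Fourier transform $\hat\phi(h)=\frac1{\sqrt n}\sum_{q\in Q}\langle h,q\rangle\phi(q)$, $\sigma(h)=n^{1/4}\sqrt{\hat s(h)}$ (where $\hat s(h)\ge0$), $\mathcal{I}=\{h\in Q:\sigma(h)\ne0\}$, and $u(h)=\hat\phi(h)/\sigma(h)$ for $h\in\mathcal{I}$. Then: (1) the numbers $\sigma(h)$, $h\in Q$, are the singular values of the $m\times n$ matrix $\Phi$ with columns $\phi_i$ (the nonzero ones being indexed by $\mathcal{I}$); (2) the dual frame vectors $\bar\phi_i=S^{-1}\phi_i$ are geometrically uniform with generating group $\mathcal{Q}$: $\bar\phi_i=U_i\bar\phi$, where $\bar\phi=S^{-1}\phi=\frac1{\sqrt n}\sum_{h\in\mathcal{I}}\frac{1}{\sigma(h)}u(h)$; (3) the canonical tight frame vectors $\mu_i=S^{-1/2}\phi_i$ are geometrically uniform with generating group $\mathcal{Q}$: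 $\mu_i=U_i\mu$, where $\mu=S^{-1/2}\phi=\frac1{\sqrt n}\sum_{h\in\mathcal{I}}u(h)$; (4) the frame bounds of $\{\phi_i\}$ are $A=\sqrt n\min_{h\in\mathcal{I}}\hat s(h)$ and $B=\sqrt n\max_{h\in\mathcal{I}}\hat s(h)$.
   Context: Inner product $\langle x,y\rangle=x^*y$. A geometrically uniform (GU) frame is a set $\{\phi_i=U_i\phi\}_{i=1}^n$ spanning $\mathbb{C}^m$, where $\{U_1,\dots,U_n\}$ is an abelian group of $n$ distinct unitary $m\times m$ matrices. Frame operator $S=\sum_i\phi_i\phi_i^*$; frame bounds $A=\lambda_{\min}(S)$, $B=\lambda_{\max}(S)$; $S^{-1/2}$ is the positive definite square root of $S^{-1}$. For $h,q\in Q=\mathbb{Z}_{n_1}\times\cdots\times\mathbb{Z}_{n_p}$, $\langle h,q\rangle=\prod_{t=1}^p e^{-2\pi i h_tq_t/n_t}$ (here $\langle h,q\rangle$ denotes this Fourier kernel, not a vector inner product). *)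

From HB Require Import structures.
From mathcomp Require Import all_boot all_order all_algebra all_field.
Set Implicit Arguments.
Unset Strict Implicit.
Unset Printing Implicit Defensive.
Import Order.TTheory GRing.Theory Num.Theory Num.Def.
Local Open Scope ring_scope.
Local Open Scope sesquilinear_scope.

(* The group Q = Z_{N_0} x ... x Z_{N_{p-1}} with N_t = (nm1 t).+1 >= 1.
   Elements are dependent finite functions h with h t : 'I_(N_t);
   each 'I_(k.+1) carries its canonical Z/(k+1)Z structure (Zp). *)
Definition QT (p : nat) (nm1 : 'I_p -> nat) : finType :=
  {dffun forall t : 'I_p, 'I_(nm1 t).+1}.

Definition qadd p (nm1 : 'I_p -> nat) (a b : QT nm1) : QT nm1 :=
  [ffun t => (a t + b t)%R].

Definition qzero p (nm1 : 'I_p -> nat) : QT nm1 := [ffun t => 0%R].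

(* e^{-2 pi i k / N} in algC.  N.-root (-1) is, by the definition of
   nthroot in algC, the N-th root of -1 of minimal nonnegative argument,
   i.e. e^{i pi / N}; hence its square is e^{2 pi i / N}. *)
Definition expm2pi (N k : nat) : algC := (((N.-root (-1)) ^+ 2)^-1) ^+ k.

Definition fkern p (nm1 : 'I_p -> nat) (h q : QT nm1) : algC :=
  \prod_(t < p) expm2pi (nm1 t).+1 (h t * q t)%N.

Definition adj (m n : nat) (A : 'M[algC]_(m, n)) : 'M[algC]_(n, m) :=
  A ^t*.

Definition inner (m : nat) (x y : 'cV[algC]_m) : algC := (adj x *m y) 0 0.

Definition posdef (m : nat) (P : 'M[algC]_m) : Prop :=
  adj P = P /\ forall x : 'cV[algC]_m, x != 0 -> 0 < inner x (P *m x).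

(* s is the (full) list of singular values of A : 'M_(m,n), i.e. the
   nonnegative square roots of the n eigenvalues (with multiplicity)
   of A^* A. *)
Definition singular_values (m n : nat) (A : 'M[algC]_(m, n)) (s : seq algC)
  : Prop :=
  all (fun x => 0 <= x) s /\
  char_poly (adj A *m A) = \prod_(x <- s) ('X - (x ^+ 2)%:P).

Definition is_min_of (P : algC -> Prop) (a : algC) : Prop :=
  P a /\ forall b, P b -> a <= b.
Definition is_max_of (P : algC -> Prop) (a : algC) : Prop :=
  P a /\ forall b, P b -> b <= a.

From HB Require Import structures.
From mathcomp Require Import all_boot all_order all_algebra all_field.
From mathcomp Require Import ring lra zify.
Set Implicit Arguments.
Unset Strict Implicit.
Unset Printing Implicit Defensive.
Import Order.TTheory GRing.Theory Num.Theory Num.Def.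
Local Open Scope ring_scope.

(* The matrices P_h = n^-1 sum_q <h,q> U_q are the isotypic projections of
   the representation q |-> U_q of the abelian group Q: by orthogonality of
   the characters <h,.> they are orthogonal Hermitian projections summing to
   the identity, and U_q P_h = conj <h,q> P_h.  Hence the components
   v_h = P_h phi satisfy S P_h = n |v_h|^2 P_h = sigma(h)^2 P_h, so S, S^-1
   and S^-1/2 are the functions sigma^2, sigma^-2 and sigma^-1 of the
   family (P_h); they commute with every U_q, which gives the dual and the
   canonical tight frames, and the eigenvalues of S are the sigma(h)^2 with
   v_h <> 0.  The Gram matrix Phi^* Phi is unitarily similar, through the
   Fourier matrix, to diag(sigma(h)^2).

   The kernel <h,q> is a character only because ((N.-root (-1))^2)^-1 is a
   primitive N-th root of unity.  Since algC defines N.-root (-1) as the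
   root of maximal real part in the closed upper half plane, this follows
   from the fact that a K-th root of unity g <> 1 of maximal real part in
   the upper half plane generates all K-th roots: dividing such a root by g
   keeps it in the upper half plane and strictly increases its real part. *)

(* Re_mul_lt below, in the coordinates u = a + ib and v = c + id. *)
Lemma unit_rotation_Re_lt (R : realFieldType) (a b c d : R) :
  a ^+ 2 + b ^+ 2 = 1 -> c ^+ 2 + d ^+ 2 = 1 -> 0 <= b -> 0 <= d ->
  0 <= a * d + b * c -> (c != 1) || (d != 0) ->
  (a * c - b * d != 1) || (a * d + b * c != 0) -> a * c - b * d < a.
Proof.
move=> ab1 cd1 b_ge0 d_ge0 Im_ge0 v_neq1 uv_neq1.
rewrite ltNge; apply/negP => le_a.
have [a_ge0|a_lt0] := lerP 0 a.
  have ac : a * (1 - c) = 0 by nra.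
  have [c1|c_neq1] := eqVneq c 1.
    by move: v_neq1; rewrite c1 eqxx /= => /negPf d_neq0; nra.
  have a0 : a = 0.
    by move/eqP: ac; rewrite mulf_eq0 subr_eq0 [1 == c]eq_sym (negPf c_neq1) orbF => /eqP.
  have b1 : b = 1 by nra.
  have d0 : d = 0 by nra.
  nra.
have [b0|b_neq0] := eqVneq b 0.
  have a1 : a = -1 by nra.
  have d0 : d = 0 by nra.
  have c1 : c = -1 by nra.
  have uv1 : a * c - b * d = 1 by rewrite a1 b0 c1; ring.
  have uv0 : a * d + b * c = 0 by rewrite b0 d0; ring.
  by move: uv_neq1; rewrite uv1 uv0 !eqxx.
have [c1|c_neq1] := eqVneq c 1; last by nra.
have d0 : d = 0 by nra.
by move: v_neq1; rewrite c1 d0 !eqxx.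
Qed.

Lemma Re_mul_lt (u v : algC) : `|u| = 1 -> `|v| = 1 ->
  0 <= 'Im u -> 0 <= 'Im v -> 0 <= 'Im (u * v) -> v != 1 -> u * v != 1 ->
  'Re (u * v) < 'Re u.
Proof.
move=> u1 v1 Iu Iv Iuv v_neq1 uv_neq1.
pose a := in_algR (Creal_Re u); pose b := in_algR (Creal_Im u).
pose c := in_algR (Creal_Re v); pose d := in_algR (Creal_Im v).
have lt_val (x y : algR) : (x < y) = (algRval x < algRval y) by [].
have le_val (x y : algR) : (x <= y) = (algRval x <= algRval y) by [].
have eq_val (x y : algR) : (x == y) = (algRval x == algRval y) by [].
have ReIm1 z : `|z| = 1 -> 'Re z ^+ 2 + 'Im z ^+ 2 = 1.
  by move=> z1; rewrite -normC2_Re_Im z1 expr1n.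
have [Re1 Im1] : 'Re (1 : algC) = 1 /\ 'Im (1 : algC) = 0.
  by rewrite (Creal_ReP _ (rpred1 _)) (Creal_ImP _ (rpred1 _)).
rewrite ReM ImM in Iuv uv_neq1 *.
have : a * c - b * d < a.
  apply: unit_rotation_Re_lt.
  - by apply/eqP; rewrite eq_val rmorphD !rmorphXn rmorph1 /= ReIm1.
  - by apply/eqP; rewrite eq_val rmorphD !rmorphXn rmorph1 /= ReIm1.
  - by rewrite le_val.
  - by rewrite le_val.
  - by rewrite le_val rmorphD !rmorphM /= [_ * 'Re v]mulrC.
  - rewrite !eq_val /= -negb_and.
    apply: contra v_neq1 => /andP [/eqP Rv1 /eqP Iv0].
    by rewrite [v]Crect Rv1 Iv0 mulr0 addr0.
  - rewrite !eq_val rmorphB rmorphD !rmorphM rmorph1 rmorph0 /= -negb_and.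
    apply: contra uv_neq1 => /andP [/eqP Ruv /eqP Iuv0]; apply/eqP/eqCP.
    by rewrite ReM ImM Re1 Im1 Ruv -Iuv0 [_ * 'Re v]mulrC.
by rewrite lt_val rmorphB !rmorphM.
Qed.

Lemma unity_root_norm (x : algC) K : (0 < K)%N -> x ^+ K = 1 -> `|x| = 1.
Proof.
move=> K_gt0 xK; apply/eqP; rewrite -(@geC0_unit_exp _ _ K.-1) ?normr_ge0 //.
by rewrite prednK // -normrX xK normr1.
Qed.

Lemma conjC_norm1 (x : algC) : `|x| = 1 -> x^* = x^-1.
Proof. by move=> x1; rewrite invC_norm x1 expr1n invr1 mul1r. Qed.

Lemma prim_rootV (R : unitRingType) n (x : R) :
  n.-primitive_root x -> n.-primitive_root x^-1.
Proof.
case/andP => n_gt0 /forallP prim_x; apply/andP; split => //; apply/forallP => i.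
by rewrite unity_rootE exprVn invr_eq1 -unity_rootE; apply: prim_x.
Qed.

Lemma real_seq_argmax (T : eqType) (s : seq T) (f : T -> algC) :
  {in s, forall x, f x \is Num.real} -> s != [::] ->
  exists2 x, x \in s & {in s, forall y, f y <= f x}.
Proof.
elim: s => [//|x s IHs] s_real _.
have [-> | s_neq0] := eqVneq s [::].
  by exists x => [|y]; rewrite ?mem_seq1 // => /eqP ->.
have sub_s y : y \in s -> y \in x :: s by rewrite inE => ->; rewrite orbT.
have [z zs z_max] := IHs (fun y ys => s_real y (sub_s y ys)) s_neq0.
have [le_xz | le_zx] := real_leP (s_real x (mem_head _ _)) (s_real z (sub_s z zs)).
  exists z; first exact: sub_s.
  by move=> y; rewrite inE => /predU1P [-> | /z_max].
exists x; first exact: mem_head.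
by move=> y; rewrite inE => /predU1P [-> // | /z_max /le_trans]; apply; apply: ltW.
Qed.

Lemma real_argmax (T : finType) (P : pred T) (f : T -> algC) :
  (forall x, P x -> f x \is Num.real) -> (exists x, P x) ->
  exists2 x, P x & forall y, P y -> f y <= f x.
Proof.
move=> P_real [x Px].
have enum_real : {in enum P, forall y, f y \is Num.real}.
  by move=> y; rewrite mem_enum; apply: P_real.
have enum_neq0 : enum P != [::].
  by apply/eqP => enumP0; move: Px; rewrite -[P x]/(x \in P) -mem_enum enumP0.
have [y] := real_seq_argmax enum_real enum_neq0.
by rewrite mem_enum => Py y_max; exists y => // z Pz; apply: y_max; rewrite mem_enum.
Qed.

Lemma real_argmin (T : finType) (P : pred T) (f : T -> algC) :
  (forall x, P x -> f x \is Num.real) -> (exists x, P x) ->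
  exists2 x, P x & forall y, P y -> f x <= f y.
Proof.
move=> P_real P_ex.
have neg_real x : P x -> - f x \is Num.real by move=> Px; rewrite rpredN P_real.
have [x Px x_max] := @real_argmax T P (fun x => - f x) neg_real P_ex.
by exists x => // y /x_max; rewrite lerN2.
Qed.

Section MaxReRoot.

Variables (K : nat) (g : algC).
Hypotheses (K_gt0 : (0 < K)%N) (gK : g ^+ K = 1) (g_neq1 : g != 1).
Hypothesis Im_g : 0 <= 'Im g.
Hypothesis g_max :
  forall y, y ^+ K = 1 -> y != 1 -> 0 <= 'Im y -> 'Re y <= 'Re g.

Let g_norm : `|g| = 1. Proof. exact: unity_root_norm gK. Qed.
Let g_neq0 : g != 0. Proof. by rewrite -normr_eq0 g_norm oner_eq0. Qed.

Lemma Re_divg_gt y : y ^+ K = 1 -> y != 1 -> 0 <= 'Im y ->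
  0 <= 'Im (y / g) /\ 'Re y < 'Re (y / g).
Proof.
move=> yK y_neq1 Im_y; have y_norm := unity_root_norm K_gt0 yK.
have yg_norm : `|y / g| = 1 by rewrite normf_div y_norm g_norm divr1.
have y_eq : y = y / g * g by rewrite divfK.
have [Im_yg | Im_yg] := real_leP (real0 _) (Creal_Im (y / g)); last first.
  have y_mul : y * (y / g)^* = g.
    by rewrite conjC_norm1 // invf_div mulrC divfK // -normr_eq0 y_norm oner_eq0.
  have Im_c : 0 < 'Im (y / g)^* by rewrite Im_conj oppr_gt0.
  have : 'Re (y * (y / g)^*) < 'Re y.
    apply: Re_mul_lt; rewrite ?norm_conjC ?y_mul ?(ltW Im_c) //.
    by apply: contraTneq Im_c => ->; rewrite (Creal_ImP _ (rpred1 _)) ltxx.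
  by rewrite y_mul => /lt_le_trans/(_ (g_max yK y_neq1 Im_y)); rewrite ltxx.
by split=> //; rewrite {1}y_eq Re_mul_lt // -y_eq.
Qed.

Lemma upper_root_expg x : x ^+ K = 1 -> 0 <= 'Im x -> exists k, x = g ^+ k.
Proof.
move=> xK Im_x.
(* x, x / g, x / g^2, ... move right in the upper half plane until they reach
   1, and they must reach it because x / g^K = x. *)
have descent j : (exists k, x = g ^+ k) \/
    (0 <= 'Im (x / g ^+ j) /\ (j = 0%N \/ 'Re x < 'Re (x / g ^+ j))).
  elim: j => [|j [? | [Im_j Re_j]]]; [by right; rewrite expr0 divr1; split; [|left] | by left |].
  move: Im_j Re_j; set y := x / g ^+ j; move=> Im_j Re_j.
  have [y1 | y_neq1] := eqVneq y 1.
    by left; exists j; rewrite -[x](divfK (expf_neq0 j g_neq0)) -/y y1 mul1r.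
  have yK : y ^+ K = 1 by rewrite expr_div_n xK exprAC gK expr1n divr1.
  have [Im_yg Re_yg] := Re_divg_gt yK y_neq1 Im_j.
  have yg : y / g = x / g ^+ j.+1 by rewrite exprSr invfM mulrA.
  have le_xy : 'Re x <= 'Re y.
    by case: Re_j => [j0 | /ltW //]; rewrite /y j0 expr0 divr1.
  by right; rewrite -yg; split=> //; right; apply: le_lt_trans le_xy Re_yg.
case: (descent K) => [// | [_ [K0 | ]]]; first by move: K_gt0; rewrite K0.
by rewrite gK divr1 ltxx.
Qed.

Lemma unity_root_expg x : x ^+ K = 1 -> exists k, x = g ^+ k.
Proof.
move=> xK; have [Im_x | Im_x] := real_leP (real0 _) (Creal_Im x).
  exact: upper_root_expg.
have xcK : x^* ^+ K = 1 by rewrite -rmorphXn xK rmorph1.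
have [|k xc_k] := upper_root_expg xcK; first by rewrite Im_conj oppr_ge0 ltW.
have gc : g^* = g ^+ K.-1.
  by rewrite conjC_norm1 //; apply: (mulfI g_neq0); rewrite divff // -exprS prednK.
by exists (K.-1 * k)%N; rewrite -[x]conjCK xc_k rmorphXn /= gc exprM.
Qed.

Lemma max_Re_root_prim : K.-primitive_root g.
Proof.
have [w w_prim] := C_prim_root_exists K_gt0.
have [j wj] := unity_root_expg (prim_expr_order w_prim).
have [d d_prim dK] := prim_order_exists K_gt0 gK.
have Kd : (K %| d)%N.
  by rewrite (prim_order_dvd w_prim) wj -exprM mulnC exprM (prim_expr_order d_prim) expr1n.
by rewrite (_ : K = d) //; apply/eqP; rewrite eqn_dvd Kd dK.
Qed.

End MaxReRoot.

Lemma rootCN1_sqr_prim N : (0 < N)%N -> N.-primitive_root (N.-root (-1 : algC) ^+ 2).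
Proof.
case: N => [//|[|N]] _.
  rewrite root1C sqrrN expr1n; apply/andP; split=> //.
  by apply/forallP => -[[|i] i_lt] //; rewrite unity_rootE expr1n eqxx.
set z := N.+2.-root (-1 : algC); set K := (N.+2 * 2)%N.
have K_gt0 : (0 < K)%N by [].
have zN : z ^+ N.+2 = -1 by rewrite rootCK.
have zK : z ^+ K = 1 by rewrite exprM zN sqrrN expr1n.
have N1_neq1 : (-1 : algC) != 1 by rewrite eq_sym -addr_eq0 (pnatr_eq0 _ 2).
have z_neq1 : z != 1 by apply: contra_neq N1_neq1 => z1; rewrite -zN z1 expr1n.
have Im_z : 0 <= 'Im z by apply: Im_rootC_ge0.
have [w w_prim] := C_prim_root_exists K_gt0.
pose P (i : 'I_K) := (w ^+ i != 1) && (0 <= 'Im (w ^+ i)).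
have P_real i : P i -> 'Re (w ^+ i) \is Num.real by move=> _; apply: Creal_Re.
have P_ex : exists i, P i.
  by have [i zi] := prim_rootP w_prim zK; exists i; rewrite /P -zi z_neq1.
have [i /andP [gi_neq1 Im_gi] gi_max] := real_argmax P_real P_ex.
set g := w ^+ i in gi_neq1 Im_gi gi_max.
have gK : g ^+ K = 1 by rewrite exprAC (prim_expr_order w_prim) expr1n.
have g_max y : y ^+ K = 1 -> y != 1 -> 0 <= 'Im y -> 'Re y <= 'Re g.
  by move=> /(prim_rootP w_prim) [j ->] yj_neq1 Im_yj; apply: gi_max; rewrite /P yj_neq1.
have g_prim := max_Re_root_prim K_gt0 gK gi_neq1 Im_gi g_max.
have gN : g ^+ N.+2 = -1.
  have /orP [/eqP gN1 | /eqP //] : (g ^+ N.+2 == 1) || (g ^+ N.+2 == -1).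
    by rewrite -sqrf_eq1 -exprM gK.
  by have := prim_order_dvd g_prim N.+2; rewrite gN1 eqxx gtnNdvd // /K; lia.
have z_eq : z = g.
  apply: eqC_semipolar; first by rewrite !(unity_root_norm K_gt0).
    by apply/eqP; rewrite eq_le rootC_Re_max ?g_max.
  exact: mulr_ge0.
have z_prim : K.-primitive_root z by rewrite z_eq.
by have := exp_prim_root z_prim 2; rewrite /K (gcdn_idPl _) ?dvdn_mull // mulnK.
Qed.

Lemma expm2piE N k : expm2pi N k = expm2pi N 1 ^+ k.
Proof. by rewrite /expm2pi expr1. Qed.

Lemma expm2pi_prim N : (0 < N)%N -> N.-primitive_root (expm2pi N 1).
Proof.
by move=> N_gt0; rewrite /expm2pi expr1; exact: prim_rootV (rootCN1_sqr_prim N_gt0).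
Qed.

Lemma expm2pi_mod N k : (0 < N)%N -> expm2pi N (k %% N) = expm2pi N k.
Proof.
by move=> N_gt0; rewrite [LHS]expm2piE [RHS]expm2piE (prim_expr_mod (expm2pi_prim N_gt0)).
Qed.

Lemma norm_expm2pi N k : (0 < N)%N -> `|expm2pi N k| = 1.
Proof.
move=> N_gt0; apply: (unity_root_norm N_gt0).
by rewrite expm2piE exprAC (prim_expr_order (expm2pi_prim N_gt0)) expr1n.
Qed.

Section Characters.

Variables (p : nat) (nm1 : 'I_p -> nat).
Local Notation Q := (QT nm1).
Implicit Types a b h k q : Q.

Lemma qaddE a b t : qadd a b t = (a t + b t)%R.
Proof. by rewrite ffunE. Qed.

Lemma qaddI a : injective (qadd a).
Proof. by move=> b c /ffunP bc; apply/ffunP => t; have := bc t; rewrite !qaddE => /addrI. Qed.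

Lemma qaddC a b : qadd a b = qadd b a.
Proof. by apply/ffunP => t; rewrite !qaddE addrC. Qed.

Lemma qadd0r a : qadd (qzero nm1) a = a.
Proof. by apply/ffunP => t; rewrite qaddE ffunE add0r. Qed.

Lemma fkernD h a b : fkern h (qadd a b) = fkern h a * fkern h b.
Proof.
rewrite /fkern -big_split /=; apply: eq_bigr => t _; rewrite qaddE.
rewrite -(expm2pi_mod _ (ltn0Sn _)) modnMmr expm2pi_mod // [LHS]expm2piE.
by rewrite mulnDr exprD -!expm2piE.
Qed.

Lemma fkernC h q : fkern h q = fkern q h.
Proof. by apply: eq_bigr => t _; rewrite mulnC. Qed.

Lemma fkern0r h : fkern h (qzero nm1) = 1.
Proof. by rewrite /fkern big1 // => t _; rewrite ffunE muln0 expm2piE expr0. Qed.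

Lemma mul_fkern_conj h q : fkern h q * (fkern h q)^* = 1.
Proof.
rewrite -normCK /fkern normr_prod big1 ?expr1n // => t _.
exact: norm_expm2pi.
Qed.

Lemma fkern_separates h k : h != k -> exists b, fkern h b != fkern k b.
Proof.
move=> h_neq_k; have [t ht] : exists t, h t != k t.
  apply/existsP; apply: contraR h_neq_k => /existsPn hk; apply/eqP/ffunP => t.
  by apply/eqP; rewrite -[_ == _]negbK hk.
pose b : Q := [ffun s => inZp (s == t)].
have Nt_gt1 : (1 < (nm1 t).+1)%N.
  rewrite ltnS lt0n; apply: contra ht => /eqP Nt0; apply/eqP/val_inj => /=.
  move: (h t : nat) (k t : nat) (ltn_ord (h t)) (ltn_ord (k t)); rewrite Nt0; lia.
have fkern_b g : fkern g b = expm2pi (nm1 t).+1 (g t).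
  rewrite /fkern (bigD1 t) //= big1 ?mulr1 => [|s /negPf st].
    by rewrite ffunE /= eqxx modn_small // muln1.
  by rewrite ffunE /= st mod0n muln0.
exists b; rewrite !fkern_b [expm2pi _ (h t)]expm2piE [expm2pi _ (k t)]expm2piE.
by rewrite (eq_prim_root_expr (expm2pi_prim (ltn0Sn _))) !modn_small.
Qed.

Lemma fkern_orthogonality h k :
  \sum_q fkern h q * (fkern k q)^* = (h == k)%:R * #|Q|%:R.
Proof.
have [<- | h_neq_k] := eqVneq h k.
  by rewrite (eq_bigr (fun _ => 1)) ?sumr_const ?mul1r // => q _; apply: mul_fkern_conj.
pose chi q := fkern h q * (fkern k q)^*.
have chiD a b : chi (qadd a b) = chi a * chi b.
  by rewrite /chi !fkernD rmorphM /=; ring.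
have [b hkb] := fkern_separates h_neq_k.
have chi_b : chi b != 1.
  apply: contra hkb => /eqP chi_b1; apply/eqP.
  by rewrite -[LHS]mulr1 -(mul_fkern_conj k b) mulrCA -/(chi b) chi_b1 mulr1.
(* Translating the summation variable by b multiplies the sum by chi b <> 1. *)
have : \sum_q chi q = chi b * \sum_q chi q.
  rewrite {1}(reindex_inj (@qaddI b)) mulr_sumr.
  by apply: eq_bigr => q _; rewrite chiD.
move/eqP; rewrite -subr_eq0 -{1}[\sum_q chi q]mul1r -mulrBl mulf_eq0.
by rewrite subr_eq0 eq_sym (negPf chi_b) mul0r => /eqP.
Qed.

End Characters.

Lemma adjE m n (A : 'M[algC]_(m, n)) i j : adj A i j = (A j i)^*.
Proof. by rewrite !mxE. Qed.

Lemma adjZ m n a (A : 'M[algC]_(m, n)) : adj (a *: A) = a^* *: adj A.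
Proof. by apply/matrixP => i j; rewrite !mxE rmorphM. Qed.

Lemma adj0 m n : adj (0 : 'M[algC]_(m, n)) = 0.
Proof. by apply/matrixP => i j; rewrite !mxE rmorph0. Qed.

Lemma adj_sum m n (I : finType) (F : I -> 'M[algC]_(m, n)) :
  adj (\sum_i F i) = \sum_i adj (F i).
Proof.
apply/matrixP => i j; rewrite adjE !summxE rmorph_sum.
by apply: eq_bigr => k _; rewrite adjE.
Qed.

Lemma adjM m n r (A : 'M[algC]_(m, n)) (B : 'M[algC]_(n, r)) :
  adj (A *m B) = adj B *m adj A.
Proof. by rewrite /adj trmx_mul map_mxM. Qed.

Lemma adjK m n (A : 'M[algC]_(m, n)) : adj (adj A) = A.
Proof. exact: trmxCK. Qed.

Lemma unitary_mul_adj m (A : 'M[algC]_m) : A \is unitarymx -> A *m adj A = 1%:M.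
Proof. by move/unitarymxP. Qed.

Lemma unitary_adj_mul m (A : 'M[algC]_m) : A \is unitarymx -> adj A *m A = 1%:M.
Proof. by move/unitary_mul_adj/mulmx1C. Qed.

Lemma inner_selfE m (x : 'cV[algC]_m) : inner x x = \sum_i `|x i 0| ^+ 2.
Proof. by rewrite /inner mxE; apply: eq_bigr => i _; rewrite adjE normCKC. Qed.

Lemma inner_self_ge0 m (x : 'cV[algC]_m) : 0 <= inner x x.
Proof. by rewrite inner_selfE sumr_ge0 // => i _; apply: exprn_ge0. Qed.

Lemma inner_self_eq0 m (x : 'cV[algC]_m) : (inner x x == 0) = (x == 0).
Proof.
apply/idP/idP => [/eqP x0 | /eqP ->]; last by rewrite /inner mulmx0 mxE.
apply/eqP/matrixP => i j; rewrite (ord1 j) mxE.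
have sqr_ge0 k : 0 <= `|x k 0| ^+ 2 by apply: exprn_ge0.
have /(psumr_eq0P (fun k _ => sqr_ge0 k))/(_ i isT)/eqP : \sum_i `|x i 0| ^+ 2 = 0.
  by rewrite -inner_selfE.
by rewrite expf_eq0 normr_eq0 => /eqP.
Qed.

Lemma inner_self_gt0 m (x : 'cV[algC]_m) : x != 0 -> 0 < inner x x.
Proof. by move=> x_neq0; rewrite lt_def inner_self_eq0 x_neq0 inner_self_ge0. Qed.

Lemma char_poly_similar (R : comNzRingType) k (A B C : 'M[R]_k) :
  B *m C = 1%:M -> char_poly (B *m A *m C) = char_poly A.
Proof.
move=> BC1; rewrite /char_poly.
have -> : char_poly_mx (B *m A *m C) =
    map_mx polyC B *m char_poly_mx A *m map_mx polyC C.
  rewrite /char_poly_mx mulmxBr mulmxBl !map_mxM mul_mx_scalar -scalemxAl.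
  by rewrite -(map_mxM _ B C) BC1 map_mx1 scalemx1.
by rewrite !det_mulmx mulrAC -det_mulmx -map_mxM BC1 map_mx1 det1 mul1r.
Qed.

Lemma posdef_sqr_eigen m (P : 'M[algC]_m) (d : algC) (x : 'cV[algC]_m) :
  posdef P -> 0 < d -> P *m (P *m x) = d ^+ 2 *: x -> P *m x = d *: x.
Proof.
move=> [_ P_pos] d_gt0 PPx.
pose z := P *m x - d *: x.
have Pz : P *m z = - d *: z.
  by rewrite mulmxBr PPx -scalemxAr scalerBr !scaleNr opprK scalerA -expr2 addrC.
apply/eqP; rewrite -subr_eq0 -/z; apply: contraT => z_neq0.
have := P_pos z z_neq0; rewrite Pz /inner -scalemxAr mxE mulNr oppr_gt0.
by rewrite pmulr_rlt0 // => /(le_lt_trans (inner_self_ge0 z)); rewrite ltxx.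
Qed.

Section Frame.

Variables (p : nat) (nm1 : 'I_p -> nat) (m : nat).
Local Notation Q := (QT nm1).
Variables (U : Q -> 'M[algC]_m) (phi : 'cV[algC]_m).
Hypothesis U_unitary : forall q, U q \is unitarymx.
Hypothesis U_morph : forall a b, U (qadd a b) = U a *m U b.

Local Notation n := #|Q|.
Local Notation q0 := (qzero nm1).

Lemma natr_card_neq0 : (n%:R : algC) != 0.
Proof. by rewrite pnatr_eq0 -lt0n; apply/card_gt0P; exists q0. Qed.

Lemma U_qzero : U q0 = 1%:M.
Proof.
have U0U0 : U q0 = U q0 *m U q0 by rewrite -U_morph qadd0r.
by rewrite -[RHS](unitary_mul_adj (U_unitary q0)) {2}U0U0 -mulmxA unitary_mul_adj ?mulmx1.
Qed.

Definition fproj h : 'M[algC]_m := n%:R^-1 *: \sum_q fkern h q *: U q.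

Lemma sum_fkernU h : \sum_q fkern h q *: U q = n%:R *: fproj h.
Proof. by rewrite /fproj scalerA mulfV ?natr_card_neq0 ?scale1r. Qed.

Lemma mulU_fproj q h : U q *m fproj h = (fkern h q)^* *: fproj h.
Proof.
suff fkUP : fkern h q *: (U q *m fproj h) = fproj h.
  by rewrite -{2}fkUP scalerA mulrC mul_fkern_conj scale1r.
rewrite /fproj -scalemxAr scalerA mulrC -scalerA; congr (_ *: _).
rewrite mulmx_sumr scaler_sumr [RHS](reindex_inj (@qaddI _ _ q)) /=.
by apply: eq_bigr => a _; rewrite -scalemxAr -U_morph scalerA fkernD.
Qed.

Lemma mul_adjU_fproj q h : adj (U q) *m fproj h = fkern h q *: fproj h.
Proof.
have P_eq : fproj h = (fkern h q)^* *: (adj (U q) *m fproj h).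
  by rewrite scalemxAr -mulU_fproj mulmxA unitary_adj_mul ?mul1mx.
by rewrite {2}P_eq scalerA mul_fkern_conj scale1r.
Qed.

Lemma fproj_commU h q : fproj h *m U q = U q *m fproj h.
Proof.
rewrite /fproj -scalemxAl -scalemxAr mulmx_suml mulmx_sumr; congr (_ *: _).
by apply: eq_bigr => a _; rewrite -scalemxAl -scalemxAr -!U_morph qaddC.
Qed.

Lemma fproj_mul h k : fproj h *m fproj k = (h == k)%:R *: fproj k.
Proof.
rewrite {1}/fproj -scalemxAl mulmx_suml.
under eq_bigr => a _ do rewrite -scalemxAl mulU_fproj scalerA.
by rewrite -scaler_suml fkern_orthogonality scalerA mulrCA mulVf ?natr_card_neq0 ?mulr1.
Qed.

Lemma adj_fproj_mul h k : adj (fproj h) *m fproj k = (k == h)%:R *: fproj k.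
Proof.
rewrite {1}/fproj adjZ adj_sum fmorphV /= conjC_nat -scalemxAl mulmx_suml.
under eq_bigr => a _ do rewrite adjZ -scalemxAl mul_adjU_fproj scalerA mulrC.
by rewrite -scaler_suml fkern_orthogonality scalerA mulrCA mulVf ?natr_card_neq0 ?mulr1.
Qed.

Lemma sum_fproj : \sum_h fproj h = 1%:M.
Proof.
rewrite /fproj -scaler_sumr exchange_big /=.
rewrite (eq_bigr (fun q => (q == q0)%:R * n%:R *: U q)) => [|q _]; last first.
  rewrite -scaler_suml -(fkern_orthogonality q q0); congr (_ *: _).
  by apply: eq_bigr => h _; rewrite fkernC (fkernC q0) fkern0r rmorph1 mulr1.
rewrite (bigD1 q0) //= big1 ?addr0 => [|q /negPf ->]; last by rewrite mul0r scale0r.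
by rewrite eqxx mul1r scalerA mulVf ?natr_card_neq0 // scale1r U_qzero.
Qed.

Lemma fproj_adj h : adj (fproj h) = fproj h.
Proof.
rewrite -[adj _]mulmx1 -sum_fproj mulmx_sumr (bigD1 h) //= big1 ?addr0.
  by rewrite adj_fproj_mul eqxx scale1r.
by move=> k k_neq_h; rewrite adj_fproj_mul (negPf k_neq_h) scale0r.
Qed.

Lemma fproj_spectral_mull (d : Q -> algC) k :
  (\sum_h d h *: fproj h) *m fproj k = d k *: fproj k.
Proof.
rewrite mulmx_suml (bigD1 k) //= big1 => [|h h_neq_k].
  by rewrite addr0 -scalemxAl fproj_mul eqxx scale1r.
by rewrite -scalemxAl fproj_mul (negPf h_neq_k) scale0r scaler0.
Qed.

Lemma fproj_spectral_mulr (d : Q -> algC) k :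
  fproj k *m (\sum_h d h *: fproj h) = d k *: fproj k.
Proof.
rewrite mulmx_sumr (bigD1 k) //= big1 => [|h h_neq_k].
  by rewrite addr0 -scalemxAr fproj_mul eqxx scale1r.
by rewrite -scalemxAr fproj_mul eq_sym (negPf h_neq_k) scale0r scaler0.
Qed.

Lemma inner_fproj x h : (adj x *m fproj h *m x) 0 0 = inner (fproj h *m x) (fproj h *m x).
Proof.
rewrite /inner adjM fproj_adj !mulmxA -(mulmxA (adj x) (fproj h) (fproj h)).
by rewrite fproj_mul eqxx scale1r.
Qed.

Lemma exists_fproj_neq0 (x : 'cV[algC]_m) : x != 0 -> exists h, fproj h *m x != 0.
Proof.
move=> x_neq0; apply/existsP; apply: contraR x_neq0 => /existsPn Px0.
rewrite -[x]mul1mx -sum_fproj mulmx_suml big1 // => h _.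
by apply/eqP; rewrite -[_ == _]negbK Px0.
Qed.

Definition phiq q := U q *m phi.
Definition fcomp h := fproj h *m phi.
Definition frameS := \sum_q phiq q *m adj (phiq q).
Definition fweight h := n%:R * inner (fcomp h) (fcomp h).

Lemma phi_sum_fcomp : phi = \sum_h fcomp h.
Proof. by rewrite -mulmx_suml sum_fproj mul1mx. Qed.

Lemma mulU_fcomp q h : U q *m fcomp h = (fkern h q)^* *: fcomp h.
Proof. by rewrite mulmxA mulU_fproj scalemxAl. Qed.

Lemma phiq_sum_fcomp q : phiq q = \sum_h (fkern h q)^* *: fcomp h.
Proof. by rewrite /phiq {1}phi_sum_fcomp mulmx_sumr; apply: eq_bigr => h _; apply: mulU_fcomp. Qed.

Lemma fproj_fcomp h : fproj h *m fcomp h = fcomp h.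
Proof. by rewrite mulmxA fproj_mul eqxx scale1r. Qed.

Lemma adj_fcomp_mul h k :
  adj (fcomp h) *m fcomp k = (h == k)%:R *: (adj (fcomp k) *m fcomp k).
Proof.
have fcompE a b : adj (fcomp a) *m fcomp b = (a == b)%:R *: (adj phi *m fproj b *m phi).
  by rewrite adjM fproj_adj mulmxA -(mulmxA _ (fproj a)) fproj_mul -scalemxAr -scalemxAl.
by rewrite !fcompE eqxx scale1r.
Qed.

Lemma frameS_fproj k : frameS *m fproj k = n%:R *: (fcomp k *m adj (fcomp k)).
Proof.
have term q : phiq q *m adj (phiq q) *m fproj k =
    (fkern k q *: U q) *m (phi *m adj (fcomp k)).
  by rewrite /phiq adjM -!mulmxA mul_adjU_fproj -3!scalemxAr -scalemxAl adjM fproj_adj.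
rewrite /frameS mulmx_suml (eq_bigr _ (fun q _ => term q)) -mulmx_suml sum_fkernU.
by rewrite -scalemxAl mulmxA.
Qed.

Lemma frameS_fcomp k : frameS *m fcomp k = fweight k *: fcomp k.
Proof.
rewrite -fproj_fcomp mulmxA frameS_fproj -scalemxAl -mulmxA [adj _ *m _]mx11_scalar.
by rewrite mul_mx_scalar scalerA fproj_fcomp.
Qed.

Lemma frameS_adj : adj frameS = frameS.
Proof. by rewrite /frameS adj_sum; apply: eq_bigr => q _; rewrite adjM adjK. Qed.

Lemma fweight_ge0 h : 0 <= fweight h.
Proof. by rewrite mulr_ge0 ?ler0n ?inner_self_ge0. Qed.

Lemma fweight_eq0 h : (fweight h == 0) = (fcomp h == 0).
Proof. by rewrite mulf_eq0 (negPf natr_card_neq0) inner_self_eq0. Qed.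

Lemma fproj_spectral_fcomp (d : Q -> algC) k :
  (\sum_h d h *: fproj h) *m fcomp k = d k *: fcomp k.
Proof. by rewrite -fproj_fcomp mulmxA fproj_spectral_mull -scalemxAl. Qed.

Lemma fproj_spectral_phiq (d : Q -> algC) q :
  (\sum_h d h *: fproj h) *m phiq q = U q *m ((\sum_h d h *: fproj h) *m phi).
Proof.
rewrite /phiq !mulmxA mulmx_suml mulmx_sumr; congr (_ *m _).
by apply: eq_bigr => h _; rewrite -scalemxAl -scalemxAr fproj_commU.
Qed.

Definition synthesis : 'M[algC]_(m, n) := \matrix_(i < m, j < n) phiq (enum_val j) i 0.

Lemma frameS_synthesis : frameS = synthesis *m adj synthesis.
Proof.
apply/matrixP => i j; rewrite summxE mxE (big_enum_val (fun q => (phiq q *m adj (phiq q)) i j)).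
by apply: eq_bigr => k _; rewrite !mxE big_ord1 !mxE.
Qed.

Lemma frameS_unit : \rank synthesis = m -> frameS \in unitmx.
Proof.
move=> rk_synthesis; rewrite unitmxE unitfE; apply/negP => /det0P [y y_neq0 yS0].
have yPhi0 : adj (y *m synthesis) == 0.
  rewrite -inner_self_eq0 /inner adjK adjM !mulmxA -(mulmxA y) -frameS_synthesis.
  by rewrite yS0 mul0mx mxE.
have : y *m synthesis == 0 by rewrite -[y *m _]adjK (eqP yPhi0) adj0.
by rewrite mulmx_free_eq0 ?(negPf y_neq0) // /row_free rk_synthesis.
Qed.

Local Notation sqn := (sqrtC (n%:R : algC)).

Lemma sqn_gt0 : 0 < sqn.
Proof. by rewrite sqrtC_gt0 lt_def natr_card_neq0 ler0n. Qed.

Lemma sqn_neq0 : sqn != 0.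
Proof. by rewrite gt_eqF ?sqn_gt0. Qed.

Lemma sqn_conj : sqn^* = sqn.
Proof. by rewrite geC0_conj ?ltW ?sqn_gt0. Qed.

Lemma sqnV_sqrK : sqn^-1 * sqn^-1 * n%:R = 1.
Proof. by rewrite -invfM -expr2 sqrtCK mulVf ?natr_card_neq0. Qed.

Lemma inner_phiq a b :
  inner (phiq a) (phiq b) = \sum_h fkern h a * (fkern h b)^* * inner (fcomp h) (fcomp h).
Proof.
rewrite /inner !phiq_sum_fcomp adj_sum mulmx_suml summxE; apply: eq_bigr => h _.
rewrite adjZ conjCK mulmx_sumr summxE (bigD1 h) //= big1 ?addr0 => [|k k_neq_h].
  by rewrite -scalemxAl -scalemxAr adj_fcomp_mul eqxx scale1r scalerA mxE.
by rewrite -scalemxAl -scalemxAr adj_fcomp_mul eq_sym (negPf k_neq_h) scale0r !scaler0 mxE.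
Qed.

Definition fourier_mx : 'M[algC]_n :=
  \matrix_(i, j) (sqn^-1 * (fkern (enum_val i) (enum_val j))^*).

Lemma fourier_mx_unitary : fourier_mx *m adj fourier_mx = 1%:M.
Proof.
apply/matrixP => i k; rewrite !mxE.
under eq_bigr => j _ do
  rewrite !mxE rmorphM /= conjCK fmorphV /= sqn_conj mulrACA [_^* * _]mulrC.
rewrite -mulr_sumr -(big_enum_val (fun q => fkern (enum_val k) q * (fkern (enum_val i) q)^*)).
by rewrite fkern_orthogonality (inj_eq enum_val_inj) eq_sym mulrCA sqnV_sqrK mulr1.
Qed.

Lemma gram_synthesis : adj synthesis *m synthesis =
  adj fourier_mx *m diag_mx (\row_i fweight (enum_val i)) *m fourier_mx.
Proof.
apply/matrixP => a b.
have -> : (adj synthesis *m synthesis) a b = inner (phiq (enum_val a)) (phiq (enum_val b)).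
  by rewrite /inner !mxE; apply: eq_bigr => i _; rewrite !mxE.
rewrite inner_phiq mul_mx_diag mxE (big_enum_val (fun h => _ * _ * inner _ _)).
apply: eq_bigr => j _; rewrite !mxE rmorphM /= fmorphV /= sqn_conj conjCK /fweight.
have := sqnV_sqrK; move: sqn^-1 (n%:R : algC) => r N rN.
by rewrite -[LHS]mul1r -rN; ring.
Qed.

Lemma char_poly_gram :
  char_poly (adj synthesis *m synthesis) = \prod_(h <- enum Q) ('X - (fweight h)%:P).
Proof.
rewrite gram_synthesis char_poly_similar; last exact: mulmx1C fourier_mx_unitary.
rewrite char_poly_trig ?diag_mx_is_trig // big_enum (big_enum_val (fun h => 'X - (fweight h)%:P)).
by apply: eq_bigr => i _; rewrite !mxE eqxx mulr1n.
Qed.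

Lemma sqnV_natr : sqn^-1 * n%:R = sqn.
Proof. by rewrite -{2}(sqrtCK n%:R) expr2 mulKf ?sqn_neq0. Qed.

Definition fourier_s h := sqn^-1 * \sum_q fkern h q * inner (phiq q0) (phiq q).
Definition fourier_phi h := sqn^-1 *: \sum_q fkern h q *: phiq q.
Definition sigma h := sqrtC sqn * sqrtC (fourier_s h).
Definition frame_supp := [set h | sigma h != 0].
Definition unit_comp h := (sigma h)^-1 *: fourier_phi h.

Lemma fourier_sE h : fourier_s h = sqn^-1 * fweight h.
Proof.
rewrite /fweight -inner_fproj; congr (_ * _).
have -> : \sum_q fkern h q * inner (phiq q0) (phiq q) =
    (adj phi *m (\sum_q fkern h q *: U q) *m phi) 0 0.
  rewrite mulmx_sumr mulmx_suml summxE; apply: eq_bigr => q _.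
  by rewrite /inner /phiq U_qzero mul1mx -scalemxAr -scalemxAl [RHS]mxE mulmxA.
by rewrite sum_fkernU -scalemxAr -scalemxAl mxE.
Qed.

Lemma sqn_fourier_s h : sqn * fourier_s h = fweight h.
Proof. by rewrite fourier_sE mulrA divff ?sqn_neq0 ?mul1r. Qed.

Lemma fourier_s_ge0 h : 0 <= fourier_s h.
Proof. by rewrite fourier_sE mulr_ge0 ?fweight_ge0 // invr_ge0 ltW ?sqn_gt0. Qed.

Lemma sigmaE h : sigma h = sqrtC (fweight h).
Proof.
by rewrite /sigma -sqrtCM ?nnegrE ?fourier_s_ge0 ?ltW ?sqn_gt0 // sqn_fourier_s.
Qed.

Lemma mem_frame_supp h : (h \in frame_supp) = (fcomp h != 0).
Proof. by rewrite inE sigmaE sqrtC_eq0 fweight_eq0. Qed.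

Lemma fourier_phiE h : fourier_phi h = sqn *: fcomp h.
Proof.
rewrite /fourier_phi (eq_bigr (fun q => (fkern h q *: U q) *m phi)) => [|q _].
  by rewrite -mulmx_suml sum_fkernU -scalemxAl scalerA sqnV_natr.
by rewrite scalemxAl.
Qed.

Lemma sum_frame_supp (F : Q -> 'cV[algC]_m) :
  (forall h, fcomp h = 0 -> F h = 0) -> \sum_(h in frame_supp) F h = \sum_h F h.
Proof.
move=> F0; rewrite big_mkcond; apply: eq_bigr => h _.
by rewrite mem_frame_supp; case: eqP => [/F0 ->|].
Qed.

Lemma singular_values_synthesis : singular_values synthesis [seq sigma h | h <- enum Q].
Proof.
split; first by apply/allP => _ /mapP [h _ ->]; rewrite sigmaE sqrtC_ge0 fweight_ge0.
rewrite char_poly_gram [RHS]big_map enumT; apply: eq_bigr => h _.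
by rewrite sigmaE sqrtCK.
Qed.

Section Invertible.

Hypothesis S_unit : frameS \in unitmx.

Lemma fproj_eq0 h : fcomp h = 0 -> fproj h = 0.
Proof.
by move=> vh0; rewrite -(mulKmx S_unit (fproj h)) frameS_fproj vh0 mul0mx scaler0 mulmx0.
Qed.

Lemma frameS_fprojE h : frameS *m fproj h = fweight h *: fproj h.
Proof.
have [vh0 | vh_neq0] := eqVneq (fcomp h) 0; first by rewrite fproj_eq0 // mulmx0 scaler0.
have w_neq0 : fweight h != 0 by rewrite fweight_eq0.
have P_eq : fproj h = (n%:R / fweight h) *: (fcomp h *m adj (fcomp h)).
  apply/eqP; rewrite -subr_eq0; apply/eqP.
  rewrite -(mulKmx S_unit (_ - _)) mulmxBr frameS_fproj -scalemxAr mulmxA frameS_fcomp.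
  by rewrite -scalemxAl scalerA divfK // subrr mulmx0.
by rewrite frameS_fproj [in RHS]P_eq scalerA mulrCA divff // mulr1.
Qed.

Lemma frameS_spectral : frameS = \sum_h fweight h *: fproj h.
Proof.
rewrite -[frameS]mulmx1 -sum_fproj mulmx_sumr.
by apply: eq_bigr => h _; rewrite frameS_fprojE.
Qed.

Lemma invS_spectral : invmx frameS = \sum_h (fweight h)^-1 *: fproj h.
Proof.
suff S_inv : frameS *m (\sum_h (fweight h)^-1 *: fproj h) = 1%:M.
  by rewrite -[RHS](mulKmx S_unit) S_inv mulmx1.
rewrite -sum_fproj mulmx_sumr; apply: eq_bigr => h _.
rewrite -scalemxAr frameS_fprojE scalerA.
have [vh0 | vh_neq0] := eqVneq (fcomp h) 0; first by rewrite fproj_eq0 // !scaler0.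
by rewrite mulVf ?scale1r ?fweight_eq0.
Qed.

Definition tight_root := \sum_h (sqrtC (fweight h))^-1 *: fproj h.

Lemma tight_root_sqr : tight_root *m tight_root = invmx frameS.
Proof.
rewrite invS_spectral {1}/tight_root mulmx_suml; apply: eq_bigr => h _.
by rewrite -scalemxAl fproj_spectral_mulr scalerA -expr2 exprVn sqrtCK.
Qed.

Lemma tight_root_posdef : posdef tight_root.
Proof.
split.
  rewrite /tight_root adj_sum; apply: eq_bigr => h _.
  by rewrite adjZ fproj_adj geC0_conj // invr_ge0 sqrtC_ge0 fweight_ge0.
move=> x x_neq0.
have [h Phx_neq0] := exists_fproj_neq0 x_neq0.
have vh_neq0 : fcomp h != 0.
  by apply: contra Phx_neq0 => /eqP/fproj_eq0 ->; rewrite mul0mx.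
have inner_sum : inner x (tight_root *m x) =
    \sum_k (sqrtC (fweight k))^-1 * inner (fproj k *m x) (fproj k *m x).
  rewrite {1}/inner /tight_root mulmx_suml mulmx_sumr summxE; apply: eq_bigr => k _.
  by rewrite -scalemxAl -scalemxAr mxE mulmxA inner_fproj.
rewrite inner_sum (bigD1 h) //= ltr_wpDr ?sumr_ge0 // => [k _|].
  by rewrite mulr_ge0 ?inner_self_ge0 // invr_ge0 sqrtC_ge0 fweight_ge0.
rewrite mulr_gt0 ?inner_self_gt0 // invr_gt0 sqrtC_gt0 lt_def fweight_eq0 vh_neq0.
exact: fweight_ge0.
Qed.

Lemma sqrt_invS_fcomp P k : posdef P -> P *m P = invmx frameS ->
  P *m fcomp k = (sqrtC (fweight k))^-1 *: fcomp k.
Proof.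
move=> P_posdef PP.
have [-> | vk_neq0] := eqVneq (fcomp k) 0; first by rewrite mulmx0 scaler0.
apply: posdef_sqr_eigen => //.
  by rewrite invr_gt0 sqrtC_gt0 lt_def fweight_eq0 vk_neq0 fweight_ge0.
by rewrite mulmxA PP invS_spectral fproj_spectral_fcomp exprVn sqrtCK.
Qed.

Lemma eigenvalue_frameS a : eigenvalue frameS a <-> exists2 h, fcomp h != 0 & a = fweight h.
Proof.
split=> [/eigenvalueP [y yS y_neq0] | [h vh_neq0 ->]]; last first.
  apply/eigenvalueP; exists (adj (fcomp h)).
    by rewrite -frameS_adj -adjM frameS_fcomp adjZ geC0_conj ?fweight_ge0.
  by apply: contra vh_neq0 => /eqP vh0; rewrite -[fcomp h]adjK vh0 adj0.
pose x := adj y.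
have x_neq0 : x != 0 by apply: contra y_neq0 => /eqP x0; rewrite -[y]adjK -/x x0 adj0.
have Sx : frameS *m x = a^* *: x by rewrite /x -{1}frameS_adj -adjM yS adjZ.
have [h Phx_neq0] := exists_fproj_neq0 x_neq0.
have : (fweight h - a^*) *: (fproj h *m x) = 0.
  have PS : fproj h *m frameS = fweight h *: fproj h.
    by rewrite frameS_spectral fproj_spectral_mulr.
  by rewrite scalerBl scalemxAl -PS -mulmxA Sx -scalemxAr subrr.
move/eqP; rewrite scalemx_eq0 (negPf Phx_neq0) orbF subr_eq0 => /eqP wa.
exists h; last by rewrite -[a]conjCK -wa geC0_conj ?fweight_ge0.
by apply: contra Phx_neq0 => /eqP/fproj_eq0 ->; rewrite mul0mx.
Qed.

Lemma exists_fcomp_neq0 : (0 < m)%N -> exists h, fcomp h != 0.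
Proof.
move=> m_gt0; apply/existsP; apply: contraT => /existsPn v0.
have : (1%:M : 'M[algC]_m) = 0.
  by rewrite -sum_fproj big1 // => h _; apply/fproj_eq0/eqP; rewrite -[_ == _]negbK v0.
move/matrixP/(_ (Ordinal m_gt0) (Ordinal m_gt0))/eqP.
by rewrite !mxE eqxx oner_eq0.
Qed.

Lemma dual_frame_GU :
  (forall q, invmx frameS *m phiq q = U q *m (invmx frameS *m phi)) /\
  invmx frameS *m phi = sqn^-1 *: \sum_(h in frame_supp) (sigma h)^-1 *: unit_comp h.
Proof.
split=> [q|]; first by rewrite invS_spectral fproj_spectral_phiq.
rewrite invS_spectral mulmx_suml scaler_sumr sum_frame_supp => [|h vh0]; last first.
  by rewrite /unit_comp fourier_phiE vh0 !scaler0.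
apply: eq_bigr => h _; rewrite -scalemxAl /unit_comp fourier_phiE !scalerA; congr (_ *: _).
by rewrite sigmaE [RHS]mulrC -!mulrA mulVKf ?sqn_neq0 // -expr2 exprVn sqrtCK.
Qed.

Lemma sqrt_invS_phi P : posdef P -> P *m P = invmx frameS ->
  P *m phi = \sum_h (sigma h)^-1 *: fcomp h.
Proof.
move=> P_posdef PP; rewrite {1}phi_sum_fcomp mulmx_sumr.
by apply: eq_bigr => h _; rewrite sqrt_invS_fcomp // sigmaE.
Qed.

Lemma canonical_tight_frame_GU :
  (exists P, posdef P /\ P *m P = invmx frameS) /\
  forall P, posdef P -> P *m P = invmx frameS ->
    (forall q, P *m phiq q = U q *m (P *m phi)) /\
    P *m phi = sqn^-1 *: \sum_(h in frame_supp) unit_comp h.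
Proof.
split=> [|P P_posdef PP].
  by exists tight_root; split; [apply: tight_root_posdef | apply: tight_root_sqr].
split=> [q|].
  rewrite sqrt_invS_phi // phiq_sum_fcomp !mulmx_sumr; apply: eq_bigr => h _.
  by rewrite -!scalemxAr sqrt_invS_fcomp // mulU_fcomp !scalerA sigmaE mulrC.
rewrite sqrt_invS_phi // scaler_sumr sum_frame_supp => [|h vh0]; last first.
  by rewrite /unit_comp fourier_phiE vh0 !scaler0.
apply: eq_bigr => h _.
by rewrite /unit_comp fourier_phiE !scalerA mulrAC mulVf ?sqn_neq0 ?mul1r.
Qed.

Lemma frame_bounds_real h : h \in frame_supp -> sqn * fourier_s h \is Num.real.
Proof. by move=> _; rewrite sqn_fourier_s ger0_real ?fweight_ge0. Qed.

Lemma frame_supp_nonempty : (0 < m)%N -> exists h, h \in frame_supp.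
Proof. by move=> /exists_fcomp_neq0 [h vh_neq0]; exists h; rewrite mem_frame_supp. Qed.

Lemma eigenvalue_frameS_supp a :
  eigenvalue frameS a <-> exists2 h, h \in frame_supp & a = sqn * fourier_s h.
Proof.
rewrite eigenvalue_frameS.
by split=> -[h vh ->]; exists h; rewrite ?mem_frame_supp ?sqn_fourier_s // -mem_frame_supp.
Qed.

Lemma frame_lower_bound : (0 < m)%N ->
  exists A, is_min_of (eigenvalue frameS) A /\
            is_min_of (fun a => exists2 h, h \in frame_supp & a = sqn * fourier_s h) A.
Proof.
move=> /frame_supp_nonempty supp_ex.
have [h0 h0_supp h0_min] := real_argmin frame_bounds_real supp_ex.
exists (sqn * fourier_s h0); split; split.
- by apply/eigenvalue_frameS_supp; exists h0.
- by move=> b /eigenvalue_frameS_supp [h h_supp ->]; apply: h0_min.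
- by exists h0.
- by move=> b [h h_supp ->]; apply: h0_min.
Qed.

Lemma frame_upper_bound : (0 < m)%N ->
  exists B, is_max_of (eigenvalue frameS) B /\
            is_max_of (fun a => exists2 h, h \in frame_supp & a = sqn * fourier_s h) B.
Proof.
move=> /frame_supp_nonempty supp_ex.
have [h0 h0_supp h0_max] := real_argmax frame_bounds_real supp_ex.
exists (sqn * fourier_s h0); split; split.
- by apply/eigenvalue_frameS_supp; exists h0.
- by move=> b /eigenvalue_frameS_supp [h h_supp ->]; apply: h0_max.
- by exists h0.
- by move=> b [h h_supp ->]; apply: h0_max.
Qed.

End Invertible.
End Frame.

Unset Implicit Arguments.

Theorem theorem2
  (p : nat) (nm1 : 'I_p -> nat) (m : nat)
  (U : QT nm1 -> 'M[algC]_m) (phi : 'cV[algC]_m)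
  (hm : (0 < m)%N)
  (hU : forall q, U q \is unitarymx)
  (hinj : injective U)
  (hhom : forall a b, U (qadd a b) = U a *m U b)
  (hspan : \rank (\matrix_(i < m, j < #|QT nm1|) (U (enum_val j) *m phi) i 0) = m) :
  let n := #|QT nm1| in
  let phiq := fun q : QT nm1 => U q *m phi in
  let Phi : 'M[algC]_(m, n) := \matrix_(i < m, j < n) phiq (enum_val j) i 0 in
  let S : 'M[algC]_m := \sum_(q : QT nm1) phiq q *m adj (phiq q) in
  let sqn := sqrtC (n%:R : algC) in
  let s := fun q : QT nm1 => inner (phiq (qzero nm1)) (phiq q) in
  let shat := fun h : QT nm1 => sqn^-1 * \sum_(q : QT nm1) fkern h q * s q in
  let phihat := fun h : QT nm1 =>
    sqn^-1 *: \sum_(q : QT nm1) fkern h q *: phiq q in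
  let sigma := fun h : QT nm1 => sqrtC sqn * sqrtC (shat h) in
  let I := [set h : QT nm1 | sigma h != 0] in
  let u := fun h : QT nm1 => (sigma h)^-1 *: phihat h in
  (* shat is nonnegative, so sigma(h) = n^{1/4} sqrt(shat h) is meaningful *)
  (forall h, 0 <= shat h) /\
  (* (1) singular values of Phi *)
  singular_values Phi [seq sigma h | h <- enum (QT nm1)] /\
  (* (2) dual frame *)
  (let phibar := invmx S *m phi in
     (forall q, invmx S *m phiq q = U q *m phibar) /\
     phibar = sqn^-1 *: \sum_(h in I) (sigma h)^-1 *: u h) /\
  (* (3) canonical tight frame, S^{-1/2} = the positive definite square
     root of S^{-1} *)
  ((exists P : 'M[algC]_m, posdef P /\ P *m P = invmx S) /\
   forall P : 'M[algC]_m, posdef P -> P *m P = invmx S ->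
     (forall q, P *m phiq q = U q *m (P *m phi)) /\
     P *m phi = sqn^-1 *: \sum_(h in I) u h) /\
  (* (4) frame bounds A = lambda_min(S), B = lambda_max(S) *)
  (exists A, is_min_of (fun a => eigenvalue S a) A /\
             is_min_of (fun a => exists2 h, h \in I & a = sqn * shat h) A) /\
  (exists B, is_max_of (fun a => eigenvalue S a) B /\
             is_max_of (fun a => exists2 h, h \in I & a = sqn * shat h) B).
Proof.
move=> n phiq Phi S sqn s shat phihat sigma I u.
(* [hinj] is not needed: distinct indices play no role in the argument. *)
have S_unit : frameS U phi \in unitmx by exact: frameS_unit hspan.
split; first exact: fourier_s_ge0 hU hhom.
split; first exact: singular_values_synthesis hU hhom.
split; first exact: dual_frame_GU hU hhom S_unit.
split; first exact: canonical_tight_frame_GU hU hhom S_unit.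
split; [exact: frame_lower_bound hU hhom S_unit hm | exact: frame_upper_bound hU hhom S_unit hm].
Qed.
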